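(* There is a functor $V:\mathbf{DBoo}\to\mathbf{CLCA}$ which is the identity on objects and sends a $\mathbf{DBoo}$-morphism $\varphi:(A,C,\mathbb B)\to(A',C',\mathbb B')$ to $\varphi^{\vee}$, where $\varphi^{\vee}(a)=\bigvee\{\varphi(b)\mid b\in\mathbb B,\ b\ll a\}$.
   Context: A contact algebra is a Boolean algebra $A$ with a relation $C$ such that $a\,C\,a$ for $a>0$; $a\,C\,b\Rightarrow a,b>0$; $C$ symmetric; $a\,C\,(b\vee c)$ iff $a\,C\,b$ or $a\,C\,c$; $a\ll b$ iff not $a\,C\,b^*$. A complete local contact algebra $(A,C,\mathbb B)$ is a contact algebra with $A$ complete and an ideal $\mathbb B$ such that (BC1) $a\ll c$, $a\in\mathbb B\Rightarrow a\ll b\ll c$ for some $b\in\mathbb B$; (BC2) $a\,C\,b\Rightarrow a\,C\,(c\wedge b)$ for some $c\in\mathbb B$; (BC3) each $a\ne0$ has $0\ne b\in\mathbb B$ with $b\ll a$. $\mathbf{DBoo}$: objects complete local contact algebras; morphisms Boolean homomorphisms $\varphi:A_1\to A_2$ reflecting contact and such that each $b'\in\mathbb B_2$ satisfies $b'\le\varphi(b)$ for some $b\in\mathbb B_1$; composition is map composition. $\mathbf{CLCA}$: same objects; morphisms maps $\alpha:A_1\to A_2$ with (CLC1) $\alpha(0)=0$; (CLC2) $\alpha(a\wedge b)=\alpha(a)\wedge\alpha(b)$; (CLC3) $a\ll b$, $a\in\mathbb B_1\Rightarrow(\alpha(a^* ))^*\ll\alpha(b)$; (CLC4) each $b\in\mathbb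 B_2$ has $a\in\mathbb B_1$ with $b\le\alpha(a)$; (CLC5) $\alpha(a)=\bigvee\{\alpha(b)\mid b\in\mathbb B_1,\ b\ll a\}$; composition $\psi\diamond\varphi=(\psi\circ\varphi)^{\vee}$ where $f^{\vee}(a)=\bigvee\{f(b)\mid b\in\mathbb B,\ b\ll a\}$. *)

(* Boolean algebras = complemented distributive lattices with
   top and bottom (ctbDistrLatticeType). *)
From mathcomp Require Import all_boot all_order.
From Stdlib Require Import ClassicalEpsilon.
Set Implicit Arguments. Unset Strict Implicit. Unset Printing Implicit Defensive.
Import Order.Theory.
Local Open Scope order_scope.

Section Defs.
Context {d : Order.disp_t} {T : ctbDistrLatticeType d}.

Definition is_ub (S : T -> Prop) (x : T) := forall y, S y -> y <= x.
Definition is_lub (S : T -> Prop) (x : T) :=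
  is_ub S x /\ forall z, is_ub S z -> x <= z.
Definition complete_BA := forall S : T -> Prop, exists x, is_lub S x.
(* the join of S, chosen by Hilbert's epsilon; it is the lub when T is complete *)
Definition bigjoin (S : T -> Prop) : T := epsilon (inhabits \bot) (is_lub S).

Definition contact_algebra (C : T -> T -> Prop) :=
  (forall a, a != \bot -> C a a) /\
  (forall a b, C a b -> a != \bot /\ b != \bot) /\
  (forall a b, C a b -> C b a) /\
  (forall a b c, C a (b `|` c) <-> C a b \/ C a c).

Definition wbelow (C : T -> T -> Prop) (a b : T) := ~ C a (~` b).

Definition is_ideal (B : T -> Prop) :=
  B \bot /\ (forall a b, a <= b -> B b -> B a) /\
  (forall a b, B a -> B b -> B (a `|` b)).

Definition complete_LCA (C : T -> T -> Prop) (B : T -> Prop) :=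
  complete_BA /\ contact_algebra C /\ is_ideal B /\
      (forall a c, wbelow C a c -> B a ->
         exists b, B b /\ wbelow C a b /\ wbelow C b c) /\
      (forall a b, C a b -> exists c, B c /\ C a (c `&` b)) /\
      (forall a, a != \bot -> exists b, B b /\ b != \bot /\ wbelow C b a).
End Defs.

Section Mor.
Context {d1 d2 : Order.disp_t} {T1 : ctbDistrLatticeType d1}
        {T2 : ctbDistrLatticeType d2}.
Variables (C1 : T1 -> T1 -> Prop) (B1 : T1 -> Prop)
          (C2 : T2 -> T2 -> Prop) (B2 : T2 -> Prop).

Definition boolean_hom (f : T1 -> T2) :=
  f \bot = \bot /\ f \top = \top /\
  (forall a b, f (a `&` b) = f a `&` f b) /\
  (forall a b, f (a `|` b) = f a `|` f b) /\
  (forall a, f (~` a) = ~` f a).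

Definition DBoo_mor (f : T1 -> T2) :=
  boolean_hom f /\
  (forall a b, C2 (f a) (f b) -> C1 a b) /\
  (forall b', B2 b' -> exists b, B1 b /\ b' <= f b).

Definition vee (f : T1 -> T2) (a : T1) : T2 :=
  bigjoin (fun y => exists b, B1 b /\ wbelow C1 b a /\ y = f b).

Definition CLCA_mor (f : T1 -> T2) :=
  f \bot = \bot /\
  (forall a b, f (a `&` b) = f a `&` f b) /\
  (forall a b, wbelow C1 a b -> B1 a -> wbelow C2 (~` f (~` a)) (f b)) /\
  (forall b, B2 b -> exists a, B1 a /\ b <= f a) /\
  (forall a, f a = vee f a).
End Mor.

Definition CLCA_comp {d1 d2 d3 : Order.disp_t} {T1 : ctbDistrLatticeType d1}
  {T2 : ctbDistrLatticeType d2} {T3 : ctbDistrLatticeType d3}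
  (C1 : T1 -> T1 -> Prop) (B1 : T1 -> Prop)
  (psi : T2 -> T3) (phi : T1 -> T2) : T1 -> T3 :=
  vee C1 B1 (fun a => psi (phi a)).

From mathcomp Require Import all_boot all_order.
From Stdlib Require Import ClassicalEpsilon FunctionalExtensionality.
Import Order.Theory.
Local Open Scope order_scope.
Set Implicit Arguments. Unset Strict Implicit.

(* Everything rests on one density argument: by (BC3), [x <= y] holds as soon
   as every [b] of the ideal with [b << x] lies below [y].  Applied to the
   identity it gives [id^vee = id]; applied in the codomain, together with the
   covering condition on DBoo-morphisms, it gives the key estimate
   [phi x <= phi^vee y] whenever [x << y].  With the interpolation property
   (BC1), this estimate yields idempotence of [^vee], the axiom (CLC3) and
   preservation of composition; meets are preserved because complete Boolean
   algebras are infinitely distributive. *)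

Lemma meet_le_shift {d} {T : ctbDistrLatticeType d} (x y z : T) :
  (x `&` y <= z) = (y <= ~` x `|` z).
Proof. by rewrite -leBLR diffE complK meetC. Qed.

Section ContactAlgebra.
Context {d : Order.disp_t} {T : ctbDistrLatticeType d}.
Variable C : T -> T -> Prop.
Hypothesis hC : contact_algebra C.

Lemma contact_refl a : a != \bot -> C a a.
Proof. by case: hC => refl _; apply: refl. Qed.

Lemma contact_neq0 a b : C a b -> a != \bot.
Proof. by case: hC => _ [neq0 _] /neq0 []. Qed.

Lemma contact_sym a b : C a b -> C b a.
Proof. by case: hC => _ [_ [sym _]]; apply: sym. Qed.

Lemma contactU a b c : C a (b `|` c) <-> C a b \/ C a c.
Proof. by case: hC => _ [_ [_ join]]; apply: join. Qed.

Lemma contactWr a b c : b <= c -> C a b -> C a c.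
Proof. by move=> /join_idPr <- Cab; apply/contactU; left. Qed.

Lemma contactWl a b c : a <= c -> C a b -> C c b.
Proof. by move=> le_ac /contact_sym /(contactWr le_ac) /contact_sym. Qed.

Lemma wbelow_le a b : wbelow C a b -> a <= b.
Proof.
move=> Wab; rewrite -[b]complK -disj_leC; apply/negPn/negP => /contact_refl Cab.
by apply: Wab; apply: contactWl (leIl _ _) (contactWr (leIr _ _) Cab).
Qed.

Lemma wbelowW a' a b b' : a' <= a -> b <= b' -> wbelow C a b -> wbelow C a' b'.
Proof.
move=> le_a le_b Wab Cab'; apply: Wab; apply: contactWl le_a (contactWr _ Cab').
by rewrite leC.
Qed.

Lemma wbelowx1 a : wbelow C a \top.
Proof. by rewrite /wbelow compl1 => /contact_sym /contact_neq0; rewrite eqxx. Qed.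

Lemma wbelowC a b : wbelow C a b -> wbelow C (~` b) (~` a).
Proof. by move=> Wab; rewrite /wbelow complK => /contact_sym. Qed.

Lemma wbelowI x y a b :
  wbelow C x a -> wbelow C y b -> wbelow C (x `&` y) (a `&` b).
Proof.
move=> Wxa Wyb.
by rewrite /wbelow complI => /contactU [/(contactWl (leIl _ _)) | /(contactWl (leIr _ _))].
Qed.

End ContactAlgebra.

Lemma bigjoin_lub {d} {T : ctbDistrLatticeType d} :
  complete_BA (T:=T) -> forall S : T -> Prop, is_lub S (bigjoin S).
Proof. by move=> hT S; apply: epsilon_spec (hT S). Qed.

Section LocalContactAlgebra.
Context {d : Order.disp_t} {T : ctbDistrLatticeType d}.
Variables (C : T -> T -> Prop) (B : T -> Prop).
Hypothesis hCB : complete_LCA C B.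

Lemma clca_complete : complete_BA (T:=T).
Proof. by case: hCB. Qed.

Lemma clca_contact : contact_algebra C.
Proof. by case: hCB => _ []. Qed.

Lemma ideal_le a b : a <= b -> B b -> B a.
Proof. by case: hCB => _ [_ [[_ [down _]] _]]; apply: down. Qed.

Lemma wbelow_interpolate a c : wbelow C a c -> B a ->
  exists b, [/\ B b, wbelow C a b & wbelow C b c].
Proof.
by case: hCB => _ [_ [_ [BC1 _]]] /BC1 W /W [b [? [? ?]]]; exists b.
Qed.

Lemma ideal_dense a : a != \bot ->
  exists b, [/\ B b, b != \bot & wbelow C b a].
Proof.
by case: hCB => _ [_ [_ [_ [_ BC3]]]] /BC3 [b [? [? ?]]]; exists b.
Qed.

Lemma le_ideal_wbelow x y :
  (forall b, B b -> wbelow C b x -> b <= y) -> x <= y.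
Proof.
move=> K; rewrite -[y]complK -disj_leC; apply/negPn/negP.
move=> /ideal_dense [b [Bb b0 Wb]].
have Wbx : wbelow C b x := wbelowW clca_contact (le_refl b) (leIl _ _) Wb.
have := wbelow_le clca_contact Wb; rewrite lexI => /andP [_ b_y'].
by move: b0; rewrite -lex0 -(meetxC y) lexI (K _ Bb Wbx) b_y'.
Qed.

End LocalContactAlgebra.

Section BooleanHom.
Context {d1 d2 : Order.disp_t} {T1 : ctbDistrLatticeType d1}
        {T2 : ctbDistrLatticeType d2}.
Variable f : T1 -> T2.
Hypothesis fB : boolean_hom f.

Lemma bool_hom0 : f \bot = \bot.
Proof. by case: fB. Qed.

Lemma bool_homI a b : f (a `&` b) = f a `&` f b.
Proof. by case: fB => _ [_ [homI _]]. Qed.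

Lemma bool_homC a : f (~` a) = ~` f a.
Proof. by case: fB => _ [_ [_ [_ homC]]]. Qed.

Lemma bool_hom_mono : {homo f : a b / a <= b}.
Proof. by case: fB => _ [_ [_ [homU _]]] a b /join_idPr <-; rewrite homU leUl. Qed.

End BooleanHom.

Section Vee.
Context {d1 d2 : Order.disp_t} {T1 : ctbDistrLatticeType d1}
        {T2 : ctbDistrLatticeType d2}.
Variables (C1 : T1 -> T1 -> Prop) (B1 : T1 -> Prop).
Hypothesis H1 : complete_LCA C1 B1.
Hypothesis T2_complete : complete_BA (T:=T2).
Implicit Types f g : T1 -> T2.

Lemma vee_ub f a b : B1 b -> wbelow C1 b a -> f b <= vee C1 B1 f a.
Proof. by move=> Bb Wba; apply: (bigjoin_lub T2_complete _).1; exists b. Qed.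

Lemma vee_least f a z :
  (forall b, B1 b -> wbelow C1 b a -> f b <= z) -> vee C1 B1 f a <= z.
Proof.
by move=> K; apply: (bigjoin_lub T2_complete _).2 => _ [b [Bb [Wba ->]]]; apply: K.
Qed.

Lemma vee_mono f : {homo vee C1 B1 f : a a' / a <= a'}.
Proof.
move=> a a' le_a; apply: vee_least => b Bb Wba; apply: vee_ub => //.
exact: (wbelowW (clca_contact H1) (le_refl b) le_a Wba).
Qed.

Lemma vee_le f a : {homo f : x y / x <= y} -> vee C1 B1 f a <= f a.
Proof.
move=> f_mono; apply: vee_least => b _ Wba.
exact/f_mono/(wbelow_le (clca_contact H1) Wba).
Qed.

Lemma le_vee f g a :
  (forall b, B1 b -> f b <= g b) -> vee C1 B1 f a <= vee C1 B1 g a.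
Proof.
by move=> K; apply: vee_least => b Bb Wba; apply: le_trans (K b Bb) (vee_ub _ Bb Wba).
Qed.

Lemma le_vee_interpolate f g a :
  (forall b c, B1 b -> wbelow C1 b c -> f b <= g c) ->
  vee C1 B1 f a <= vee C1 B1 g a.
Proof.
move=> K; apply: vee_least => b Bb Wba.
have [c [Bc Wbc Wca]] := wbelow_interpolate H1 Wba Bb.
exact: le_trans (K b c Bb Wbc) (vee_ub _ Bc Wca).
Qed.

(* [x `&` _] is left adjoint to [~` x `|` _], hence commutes with joins. *)
Lemma meet_vee_le f x a z :
  (forall b, B1 b -> wbelow C1 b a -> x `&` f b <= z) ->
  x `&` vee C1 B1 f a <= z.
Proof.
move=> K; rewrite meet_le_shift; apply: vee_least => b Bb Wba.
by rewrite -meet_le_shift; apply: K.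
Qed.

End Vee.

Section DBooMorphism.
Context {d1 d2 : Order.disp_t} {T1 : ctbDistrLatticeType d1}
        {T2 : ctbDistrLatticeType d2}.
Variables (C1 : T1 -> T1 -> Prop) (B1 : T1 -> Prop)
          (C2 : T2 -> T2 -> Prop) (B2 : T2 -> Prop).
Hypotheses (H1 : complete_LCA C1 B1) (H2 : complete_LCA C2 B2).
Variable phi : T1 -> T2.
Hypothesis phiD : DBoo_mor C1 B1 C2 B2 phi.

Local Notation phiV := (vee C1 B1 phi).
Let T2_complete := clca_complete H2.

Lemma dboo_hom : boolean_hom phi.
Proof. by case: phiD. Qed.

Lemma dboo_wbelow x y : wbelow C1 x y -> wbelow C2 (phi x) (phi y).
Proof.
case: phiD => _ [reflect_contact _] Wxy Cxy; apply: Wxy; apply: reflect_contact.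
by rewrite (bool_homC dboo_hom).
Qed.

Lemma le_vee_of_wbelow x y : wbelow C1 x y -> phi x <= phiV y.
Proof.
move=> Wxy; apply: (le_ideal_wbelow H2) => b' Bb' Wb'.
have [_ [_ cover]] := phiD; have [e [Be b'_e]] := cover b' Bb'.
have Bxe : B1 (x `&` e) := ideal_le H1 (leIr e x) Be.
have Wxey : wbelow C1 (x `&` e) y.
  exact: (wbelowW (clca_contact H1) (leIl _ _) (le_refl y) Wxy).
apply: le_trans (vee_ub T2_complete phi Bxe Wxey).
by rewrite (bool_homI dboo_hom) lexI b'_e (wbelow_le (clca_contact H2) Wb').
Qed.

Lemma wbelow_vee x y : B1 x -> wbelow C1 x y -> wbelow C2 (phi x) (phiV y).
Proof.
move=> Bx Wxy; have [c [Bc Wxc Wcy]] := wbelow_interpolate H1 Wxy Bx.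
exact: (wbelowW (clca_contact H2) (le_refl _) (vee_ub T2_complete phi Bc Wcy)
                (dboo_wbelow Wxc)).
Qed.

Lemma vee_le_hom a : phiV a <= phi a.
Proof. exact/(vee_le H1 T2_complete)/bool_hom_mono/dboo_hom. Qed.

Lemma vee0 : phiV \bot = \bot.
Proof. by apply/eqP; rewrite -lex0 -(bool_hom0 dboo_hom) vee_le_hom. Qed.

Lemma veeI a b : phiV (a `&` b) = phiV a `&` phiV b.
Proof.
apply/le_anti/andP; split.
  by rewrite lexI !(vee_mono H1 T2_complete) ?leIl ?leIr.
rewrite meetC; apply: (meet_vee_le T2_complete) => c Bc Wca.
rewrite meetC; apply: (meet_vee_le T2_complete) => c' Bc' Wc'b.
rewrite -(bool_homI dboo_hom); apply: (vee_ub T2_complete).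
  exact: (ideal_le H1 (leIl c c') Bc).
exact: (wbelowI (clca_contact H1) Wca Wc'b).
Qed.

Lemma vee_wbelow a b :
  wbelow C1 a b -> B1 a -> wbelow C2 (~` phiV (~` a)) (phiV b).
Proof.
move=> Wab Ba; have [c [Bc Wac Wcb]] := wbelow_interpolate H1 Wab Ba.
apply: (wbelowW (clca_contact H2) _ (le_refl _) (wbelow_vee Bc Wcb)).
rewrite leCx -(bool_homC dboo_hom).
exact/le_vee_of_wbelow/(wbelowC (clca_contact H1)).
Qed.

Lemma vee_cover b' : B2 b' -> exists a, B1 a /\ b' <= phiV a.
Proof.
move=> Bb'; have [_ [_ cover]] := phiD; have [e [Be b'_e]] := cover b' Bb'.
have [c [Bc Wec _]] := wbelow_interpolate H1 (wbelowx1 (clca_contact H1) (a:=e)) Be.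
by exists c; split; last exact: le_trans b'_e (le_vee_of_wbelow Wec).
Qed.

Lemma vee_idem a : phiV a = vee C1 B1 phiV a.
Proof.
apply/le_anti/andP; split.
  by apply: (le_vee_interpolate H1 T2_complete) => b c _; apply: le_vee_of_wbelow.
exact/(vee_le H1 T2_complete)/(vee_mono H1 T2_complete).
Qed.

Lemma CLCA_mor_vee : CLCA_mor C1 B1 C2 B2 phiV.
Proof.
split; first exact: vee0.
split; first exact: veeI.
split; first exact: vee_wbelow.
split; first exact: vee_cover.
exact: vee_idem.
Qed.

End DBooMorphism.

Lemma vee_id {d} {T : ctbDistrLatticeType d} (C : T -> T -> Prop) (B : T -> Prop) :
  complete_LCA C B -> vee C B (fun a : T => a) = (fun a : T => a).
Proof.
move=> H; apply: functional_extensionality => a; apply/le_anti/andP; split.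
  exact: (vee_le H (clca_complete H)).
by apply: (le_ideal_wbelow H) => b Bb Wba; apply: (vee_ub (clca_complete H)).
Qed.

Lemma vee_comp {d1 d2 d3 : Order.disp_t} {T1 : ctbDistrLatticeType d1}
    {T2 : ctbDistrLatticeType d2} {T3 : ctbDistrLatticeType d3}
    (C1 : T1 -> T1 -> Prop) (B1 : T1 -> Prop)
    (C2 : T2 -> T2 -> Prop) (B2 : T2 -> Prop)
    (C3 : T3 -> T3 -> Prop) (B3 : T3 -> Prop)
    (phi : T1 -> T2) (psi : T2 -> T3) :
  complete_LCA C1 B1 -> complete_LCA C2 B2 -> complete_LCA C3 B3 ->
  DBoo_mor C1 B1 C2 B2 phi -> DBoo_mor C2 B2 C3 B3 psi ->
  vee C1 B1 (fun a => psi (phi a)) =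
  CLCA_comp C1 B1 (vee C2 B2 psi) (vee C1 B1 phi).
Proof.
move=> H1 H2 H3 phiD psiD; have T3_complete := clca_complete H3.
rewrite /CLCA_comp; apply: functional_extensionality => a.
apply/le_anti/andP; split.
  apply: (le_vee_interpolate H1 T3_complete) => b c Bb Wbc.
  exact/(le_vee_of_wbelow H2 H3 psiD)/(wbelow_vee H1 H2 phiD).
apply: le_vee => // b _.
apply: le_trans (vee_le_hom H2 H3 psiD _) _.
exact/(bool_hom_mono (dboo_hom psiD))/(vee_le_hom H1 H2 phiD).
Qed.

Theorem proposition4p1
  (d1 d2 d3 : Order.disp_t) (T1 : ctbDistrLatticeType d1)
  (T2 : ctbDistrLatticeType d2) (T3 : ctbDistrLatticeType d3)
  (C1 : T1 -> T1 -> Prop) (B1 : T1 -> Prop)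
  (C2 : T2 -> T2 -> Prop) (B2 : T2 -> Prop)
  (C3 : T3 -> T3 -> Prop) (B3 : T3 -> Prop) :
  complete_LCA C1 B1 -> complete_LCA C2 B2 -> complete_LCA C3 B3 ->
  (* V sends DBoo-morphisms to CLCA-morphisms *)
  (forall phi : T1 -> T2, DBoo_mor C1 B1 C2 B2 phi ->
     CLCA_mor C1 B1 C2 B2 (vee C1 B1 phi)) /\
  (* V preserves identities *)
  (vee C1 B1 (fun a : T1 => a) = (fun a : T1 => a)) /\
  (* V preserves composition *)
  (forall (phi : T1 -> T2) (psi : T2 -> T3),
     DBoo_mor C1 B1 C2 B2 phi -> DBoo_mor C2 B2 C3 B3 psi ->
     vee C1 B1 (fun a => psi (phi a)) =
     CLCA_comp C1 B1 (vee C2 B2 psi) (vee C1 B1 phi)).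
Proof.
move=> H1 H2 H3; split; first by move=> phi; apply: CLCA_mor_vee.
split; first exact: vee_id.
by move=> phi psi; apply: vee_comp.
Qed.
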